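(* Let $n>3$ be a real number. The fourth-order algebraic differential equation $$y''''\,(y')^2-3\,y'''\,y''\,y'+2\left(1-n^{-2}\right)(y'')^3=0 \qquad \text{(B)}$$ is universal: for every continuous function $\phi:\mathbb R\to\mathbb R$ and every positive continuous function $\epsilon:\mathbb R\to(0,\infty)$ there exists a function $y:\mathbb R\to\mathbb R$ of class $C^4$ which satisfies (B) at every point of $\mathbb R$ and such that $$|y(t)-\phi(t)|<\epsilon(t)\qquad\text{for all } t\in\mathbb R.$$
   Context: A polynomial ordinary differential equation $P(y,y',\dots,y^{(k)})=0$ is called universal if for every continuous $\phi:\mathbb R\to\mathbb R$ and every positive continuous $\epsilon:\mathbb R\to(0,\infty)$ it has a solution $y$, defined and sufficiently differentiable on all of $\mathbb R$ (here: $C^4$, so that the equation holds pointwise), with $|y(t)-\phi(t)|<\epsilon(t)$ for all real $t$. *)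

From Stdlib Require Import Reals.
From Coquelicot Require Import Coquelicot.
Open Scope R_scope.

Definition C4 (y : R -> R) : Prop :=
  (forall k : nat, (k <= 4)%nat -> forall t : R, ex_derive_n y k t) /\
  (forall t : R, continuous (Derive_n y 4) t).

Definition eqB (n : R) (y : R -> R) (t : R) : Prop :=
  Derive_n y 4 t * (Derive_n y 1 t) ^ 2
  - 3 * Derive_n y 3 t * Derive_n y 2 t * Derive_n y 1 t
  + 2 * (1 - / (n ^ 2)) * (Derive_n y 2 t) ^ 3 = 0.

(* Equation (B) is invariant under [y |-> A + B * y (a * t + c)], and the sum of
   two solutions whose derivatives have disjoint supports is again a solution.  So it
   suffices to build one C^4 solution rising from 0 to 1 on [0, 1] and constant
   outside.  Let [v] solve [v' = sqrt (1 + v^4 / n^2)], [v(0) = 0]; it escapes to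
   -oo and +oo in finite time.  Along [v], the function
   [u = (v^2 / n + sqrt (1 + v^4 / n^2)) ^ (- n / 2)] has derivatives [u^(k) = Q_k(v) u]
   with explicit [Q_k] satisfying [u''' u^2 - 3 u'' u' u + 2 (1 - n^-2) u'^3 = 0], and
   for [n > 3] all of them vanish at the ends of the escape interval.  Extending [u] by
   zero and normalizing its primitive gives the step.  The solution [y] interpolates
   [phi] by rescaled steps on a grid that, on each [[k, k + 1]], is fine enough for the
   oscillation of [phi] over a cell to stay below [eps / 2]. *)

From Stdlib Require Import Reals Lra Psatz Classical ClassicalEpsilon.
From Coquelicot Require Import Coquelicot.
Open Scope R_scope.

(** * Towers of derivatives *)

Definition derivative_tower (f : nat -> R -> R) : Prop :=
  (forall k x, (k < 4)%nat -> is_derive (f k) x (f (S k) x)) /\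
  (forall x, continuous (f 4%nat) x).

Definition tower_solves_B (n : R) (f : nat -> R -> R) : Prop :=
  forall x, f 4%nat x * (f 1%nat x) ^ 2 - 3 * f 3%nat x * f 2%nat x * f 1%nat x
            + 2 * (1 - / (n ^ 2)) * (f 2%nat x) ^ 3 = 0.

Lemma Derive_n_tower f k x :
  derivative_tower f -> (k <= 4)%nat -> Derive_n (f 0%nat) k x = f k x.
Proof.
  intros Hf. revert x. induction k as [|k IHk]; intros x Hk; [reflexivity|].
  simpl. rewrite (Derive_ext _ (f k)) by (intros; apply IHk; lia).
  apply is_derive_unique, (proj1 Hf); lia.
Qed.

Lemma ex_derive_n_tower f k x :
  derivative_tower f -> (k <= 4)%nat -> ex_derive_n (f 0%nat) k x.
Proof.
  intros Hf Hk. destruct k as [|k]; [exact I|].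
  apply ex_derive_ext with (f k).
  - intros; symmetry; apply Derive_n_tower; auto; lia.
  - eexists; apply (proj1 Hf); lia.
Qed.

Lemma C4_eqB_of_local_towers n y :
  (forall t, exists f, derivative_tower f /\ tower_solves_B n f /\
                       locally t (fun s => f 0%nat s = y s)) ->
  C4 y /\ forall t, eqB n y t.
Proof.
  intros Hloc. split; [split|].
  - intros k Hk t. destruct (Hloc t) as [f [Hf [_ Hy]]].
    apply (ex_derive_n_ext_loc _ _ k t Hy), ex_derive_n_tower; auto.
  - intros t. destruct (Hloc t) as [f [Hf [_ Hy]]].
    apply (continuous_ext_loc _ (f 4%nat)); [|apply Hf].
    apply filter_imp with (2 := locally_locally _ _ Hy). intros s Hs.
    rewrite <- (Derive_n_ext_loc _ _ 4 s Hs). symmetry; apply Derive_n_tower; auto.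
  - intros t. destruct (Hloc t) as [f [Hf [HB Hy]]]. unfold eqB.
    rewrite <- !(Derive_n_ext_loc _ _ _ t Hy), !Derive_n_tower by (auto; lia).
    apply HB.
Qed.

Definition tower_affine (A B a c : R) (f : nat -> R -> R) : nat -> R -> R :=
  fun k x => match k with O => A | S _ => 0 end + B * a ^ k * f k (a * x + c).

Definition tower_plus (f g : nat -> R -> R) : nat -> R -> R :=
  fun k x => f k x + g k x.

Lemma is_derive_affine_comp (h : R -> R) a c x dh :
  is_derive h (a * x + c) dh -> is_derive (fun x => h (a * x + c)) x (a * dh).
Proof.
  intros Hh. apply (is_derive_comp h (fun x => a * x + c)); auto.
  auto_derive; auto; ring.
Qed.

Lemma derivative_tower_affine A B a c f :
  derivative_tower f -> derivative_tower (tower_affine A B a c f).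
Proof.
  intros [Hd Hc]. unfold tower_affine. split.
  - intros k x Hk.
    replace (0 + B * a ^ S k * f (S k) (a * x + c))
      with (0 + B * a ^ k * (a * f (S k) (a * x + c))) by (simpl; ring).
    apply (is_derive_plus (fun _ => _) (fun x => B * a ^ k * f k (a * x + c))).
    + apply (@is_derive_const R_AbsRing R_NormedModule).
    + apply is_derive_scal, is_derive_affine_comp, Hd, Hk.
  - intros x. apply (continuous_plus (fun _ => 0) (fun x => B * a ^ 4 * f 4%nat (a * x + c))).
    + apply continuous_const.
    + apply (continuous_scal_r (B * a ^ 4) (fun x => f 4%nat (a * x + c))).
      apply (continuous_comp (fun x => a * x + c)), Hc.
      apply (ex_derive_continuous (fun x => a * x + c)). auto_derive; auto.
Qed.

Lemma tower_solves_B_affine n A B a c f :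
  tower_solves_B n f -> tower_solves_B n (tower_affine A B a c f).
Proof.
  intros HB x. unfold tower_affine; cbn iota. rewrite !Rplus_0_l.
  rewrite <- (Rmult_0_r (B ^ 3 * a ^ 6)), <- (HB (a * x + c)). ring.
Qed.

Lemma derivative_tower_plus f g :
  derivative_tower f -> derivative_tower g -> derivative_tower (tower_plus f g).
Proof.
  intros [Hf Cf] [Hg Cg]. unfold tower_plus. split.
  - intros k x Hk. apply (is_derive_plus (f k) (g k)); auto.
  - intros x. apply (continuous_plus (f 4%nat) (g 4%nat)); auto.
Qed.

Definition tower_flat_at (f : nat -> R -> R) (x : R) : Prop :=
  f 1%nat x = 0 /\ f 2%nat x = 0 /\ f 3%nat x = 0 /\ f 4%nat x = 0.

Lemma tower_solves_B_plus n f g :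
  tower_solves_B n f -> tower_solves_B n g ->
  (forall x, tower_flat_at f x \/ tower_flat_at g x) ->
  tower_solves_B n (tower_plus f g).
Proof.
  intros Hf Hg Hfg x. unfold tower_plus.
  destruct (Hfg x) as [[-> [-> [-> ->]]] | [-> [-> [-> ->]]]].
  - rewrite !Rplus_0_l. apply Hg.
  - rewrite !Rplus_0_r. apply Hf.
Qed.

(** * Inverse of an increasing bounded function *)

Section IncreasingInverse.

Variables (g dg : R -> R).
Hypothesis g_deriv : forall s, is_derive g s (dg s).
Hypothesis dg_pos : forall s, 0 < dg s.
Hypothesis g_bounded : exists M, forall s, Rabs (g s) <= M.

Definition range_sup : R := epsilon (inhabits 0) (is_lub (fun x => exists s, x = g s)).
Definition range_inf : R := - epsilon (inhabits 0) (is_lub (fun x => exists s, x = - g s)).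
Definition inverse (t : R) : R := epsilon (inhabits 0) (fun s => g s = t).

Lemma increasing_of_deriv s1 s2 : s1 < s2 -> g s1 < g s2.
Proof.
  intros H. apply (incr_function g m_infty p_infty dg); simpl; auto.
  intros x _ _. apply Rlt_gt, dg_pos.
Qed.

Lemma continuous_of_deriv s : continuous g s.
Proof. apply (ex_derive_continuous g). eexists; apply g_deriv. Qed.

Lemma is_lub_range_sup : is_lub (fun x => exists s, x = g s) range_sup.
Proof.
  unfold range_sup. apply epsilon_spec. destruct g_bounded as [M HM].
  destruct (completeness (fun x => exists s, x = g s)) as [L HL].
  - exists M. intros x [s ->]. apply Rabs_le_between, HM.
  - exists (g 0), 0. reflexivity.
  - exists L; exact HL.
Qed.

Lemma is_lub_range_inf : is_lub (fun x => exists s, x = - g s) (- range_inf).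
Proof.
  unfold range_inf. rewrite Ropp_involutive. apply epsilon_spec.
  destruct g_bounded as [M HM].
  destruct (completeness (fun x => exists s, x = - g s)) as [L HL].
  - exists M. intros x [s ->]. specialize (HM s). apply Rabs_le_between in HM. lra.
  - exists (- g 0), 0. reflexivity.
  - exists L; exact HL.
Qed.

Lemma lt_range_sup s : g s < range_sup.
Proof.
  apply Rlt_le_trans with (g (s + 1)).
  - apply increasing_of_deriv; lra.
  - apply is_lub_range_sup. exists (s + 1); reflexivity.
Qed.

Lemma range_inf_lt s : range_inf < g s.
Proof.
  apply Rle_lt_trans with (g (s - 1)).
  - enough (- g (s - 1) <= - range_inf) by lra.
    apply is_lub_range_inf. exists (s - 1); reflexivity.
  - apply increasing_of_deriv; lra.
Qed.

Lemma range_sup_approx t : t < range_sup -> exists s, t < g s.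
Proof.
  intros Ht. apply NNPP. intros Hno.
  enough (range_sup <= t) by lra.
  apply is_lub_range_sup. intros x [s ->].
  apply Rnot_lt_le. intros Hs. apply Hno. exists s; exact Hs.
Qed.

Lemma range_inf_approx t : range_inf < t -> exists s, g s < t.
Proof.
  intros Ht. apply NNPP. intros Hno.
  enough (- range_inf <= - t) by lra.
  apply is_lub_range_inf. intros x [s ->].
  apply Ropp_le_contravar, Rnot_lt_le. intros Hs. apply Hno. exists s; exact Hs.
Qed.

Lemma g_inverse t : range_inf < t < range_sup -> g (inverse t) = t.
Proof.
  intros [Hinf Hsup]. unfold inverse. apply epsilon_spec.
  destruct (range_inf_approx t Hinf) as [s1 Hs1].
  destruct (range_sup_approx t Hsup) as [s2 Hs2].
  assert (Hs12 : s1 < s2).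
  { apply Rnot_le_lt. intros H. destruct H as [H | ->].
    - pose proof (increasing_of_deriv _ _ H). lra.
    - lra. }
  destruct (IVT (fun s => g s - t) s1 s2) as [s [_ Hs]]; try lra.
  - intros x. apply continuity_pt_minus.
    + apply continuity_pt_filterlim, continuous_of_deriv.
    + apply continuity_pt_const. intros a b; reflexivity.
  - exists s. lra.
Qed.

Lemma inverse_g s : inverse (g s) = s.
Proof.
  assert (Hs := g_inverse (g s) (conj (range_inf_lt s) (lt_range_sup s))).
  destruct (Rtotal_order (inverse (g s)) s) as [H | [H | H]]; auto;
    apply increasing_of_deriv in H; lra.
Qed.

Lemma lt_inverse V t : range_inf < t < range_sup -> g V < t -> V < inverse t.
Proof.
  intros Ht HV. apply Rnot_le_lt. intros H.
  destruct H as [H | <-].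
  - apply increasing_of_deriv in H. rewrite g_inverse in H; auto. lra.
  - rewrite g_inverse in HV; auto. lra.
Qed.

Lemma inverse_lt V t : range_inf < t < range_sup -> t < g V -> inverse t < V.
Proof.
  intros Ht HV. apply Rnot_le_lt. intros H.
  destruct H as [H | ->].
  - apply increasing_of_deriv in H. rewrite g_inverse in H; auto. lra.
  - rewrite g_inverse in HV; auto. lra.
Qed.

Lemma continuous_inverse t : range_inf < t < range_sup -> continuity_pt inverse t.
Proof.
  intros Ht. set (s := inverse t).
  assert (Hin : forall u, range_inf < g u < range_sup)
    by (intros; split; [apply range_inf_lt | apply lt_range_sup]).
  pose proof (Hin (s - 1)). pose proof (Hin (s + 1)).
  apply (Ranalysis5.continuity_pt_recip_interv g inverse (s - 1) (s + 1)); try lra.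
  - intros; apply increasing_of_deriv; auto.
  - intros x H1 H2. unfold comp, id. apply g_inverse; lra.
  - intros x H1 H2. split.
    + destruct H1 as [H1 | <-]; [|rewrite inverse_g; lra].
      left. apply lt_inverse; auto; lra.
    + destruct H2 as [H2 | ->]; [|rewrite inverse_g; lra].
      left. apply inverse_lt; auto; lra.
  - intros; apply continuity_pt_filterlim, continuous_of_deriv.
  - assert (Hs : g s = t) by apply (g_inverse t Ht).
    rewrite <- Hs. split; apply increasing_of_deriv; lra.
Qed.

Lemma is_derive_inverse t :
  range_inf < t < range_sup -> is_derive inverse t (/ dg (inverse t)).
Proof.
  intros Ht. apply is_derive_Reals.
  assert (Hdiff : forall a, derivable_pt g a)
    by (intros a; exists (dg a); apply is_derive_Reals, g_deriv).
  set (lb := (range_inf + t) / 2). set (ub := (t + range_sup) / 2).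
  assert (Hlb : range_inf < lb < t) by (unfold lb; lra).
  assert (Hub : t < ub < range_sup) by (unfold ub; lra).
  assert (Hmono : inverse lb <= inverse t <= inverse ub).
  { split; left.
    - apply lt_inverse; [lra|]. rewrite g_inverse; lra.
    - apply inverse_lt; [lra|]. rewrite g_inverse; lra. }
  assert (Hdg : derive_pt g (inverse t) (Hdiff (inverse t)) = dg (inverse t))
    by (apply derive_pt_eq_0, is_derive_Reals, g_deriv).
  pose proof (dg_pos (inverse t)).
  replace (/ dg (inverse t)) with (1 / derive_pt g (inverse t) (Hdiff (inverse t)))
    by (rewrite Hdg; field; lra).
  apply (Ranalysis5.derivable_pt_lim_recip_interv g inverse lb ub t (fun a _ => Hdiff a));
    auto using continuous_inverse; try lra.
  - intros x Hx. unfold comp, id. apply g_inverse; lra.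
Qed.

End IncreasingInverse.

(** * The escaping orbit and its jets *)

Definition rate (n v : R) : R := sqrt (1 + v ^ 4 / n ^ 2).
Definition hitting_time (n v : R) : R := RInt (fun r => / rate n r) 0 v.
Definition orbit (n : R) : R -> R := inverse (hitting_time n).
Definition orbit_start (n : R) : R := range_inf (hitting_time n).
Definition orbit_end (n : R) : R := range_sup (hitting_time n).

Definition height (n v : R) : R := v ^ 2 / n + rate n v.
Definition profile (n v : R) : R := exp (- (n / 2) * ln (height n v)).
Definition coef (n : R) (k : nat) (v : R) : R :=
  match k with
  | O => 1
  | 1%nat => - v
  | 2%nat => v ^ 2 - rate n v
  | _ => 3 * v * rate n v - 2 * v ^ 3 / n ^ 2 - v ^ 3
  end.
Definition jet (n : R) (k : nat) (v : R) : R := coef n k v * profile n v.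

Section Orbit.

Variable n : R.
Hypothesis n_pos : 0 < n.

Lemma pow4_div_nonneg v : 0 <= v ^ 4 / n ^ 2.
Proof. apply Rdiv_le_0_compat; nra. Qed.

Lemma rate_ge_1 v : 1 <= rate n v.
Proof.
  unfold rate. rewrite <- sqrt_1 at 1. apply sqrt_le_1_alt.
  pose proof (pow4_div_nonneg v). lra.
Qed.

Lemma rate_sq v : rate n v * rate n v = 1 + v ^ 4 / n ^ 2.
Proof. apply sqrt_sqrt. pose proof (pow4_div_nonneg v). lra. Qed.

Lemma inv_rate_pos v : 0 < / rate n v.
Proof. apply Rinv_0_lt_compat. pose proof (rate_ge_1 v). lra. Qed.

Lemma continuous_inv_rate v : continuous (fun r => / rate n r) v.
Proof.
  apply (ex_derive_continuous (fun r => / rate n r)).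
  pose proof (pow4_div_nonneg v). pose proof (rate_ge_1 v).
  unfold rate in *. auto_derive. unfold Rdiv in *; simpl in *. repeat split; lra.
Qed.

Lemma is_derive_hitting_time v : is_derive (hitting_time n) v (/ rate n v).
Proof.
  apply (is_derive_RInt (fun r => / rate n r) (hitting_time n) 0 v).
  - apply filter_forall. intros b.
    apply (RInt_correct (V := R_CompleteNormedModule)), ex_RInt_continuous.
    intros; apply continuous_inv_rate.
  - apply continuous_inv_rate.
Qed.

Lemma hitting_time_0 : hitting_time n 0 = 0.
Proof. apply (RInt_point (V := R_CompleteNormedModule)). Qed.

Lemma hitting_time_increasing s1 s2 : s1 < s2 -> hitting_time n s1 < hitting_time n s2.
Proof. apply increasing_of_deriv with (1 := is_derive_hitting_time), inv_rate_pos. Qed.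

(* The derivative [2 / (1 + v^2/n)] of [2 sqrt n atan (v / sqrt n)] dominates [1 / rate]. *)
Lemma atan_sub_hitting_time_increasing s1 s2 : s1 < s2 ->
  2 * sqrt n * atan (s1 / sqrt n) - hitting_time n s1 <
  2 * sqrt n * atan (s2 / sqrt n) - hitting_time n s2.
Proof.
  intros Hs12.
  apply (incr_function (fun s => 2 * sqrt n * atan (s / sqrt n) - hitting_time n s)
           m_infty p_infty (fun s => 2 / (1 + s ^ 2 / n) - / rate n s)); try easy.
  - intros s _ _.
    apply (is_derive_minus (fun s => 2 * sqrt n * atan (s / sqrt n)) (hitting_time n));
      [|apply is_derive_hitting_time].
    assert (Hsq : 0 < sqrt n) by (apply sqrt_lt_R0; lra).
    auto_derive; [lra|]. unfold Rsqr.
    assert (Hn : n = sqrt n * sqrt n) by (rewrite sqrt_sqrt; lra).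
    set (r := sqrt n) in *. rewrite Hn. field. split; [lra|]. nra.
  - intros s _ _. pose proof (rate_ge_1 s). pose proof (rate_sq s).
    assert (Ha : 0 <= s ^ 2 / n) by (apply Rdiv_le_0_compat; nra).
    assert (Ha2 : s ^ 4 / n ^ 2 = (s ^ 2 / n) * (s ^ 2 / n)) by (field; lra).
    set (a := s ^ 2 / n) in *. set (F := rate n s) in *.
    apply Rlt_gt, Rlt_0_minus.
    apply Rmult_lt_reg_l with (F * (1 + a)); [nra|].
    field_simplify; nra.
Qed.

Lemma hitting_time_bounded : exists M, forall s, Rabs (hitting_time n s) <= M.
Proof.
  exists (PI * sqrt n). intros s.
  assert (Hsq : 0 < sqrt n) by (apply sqrt_lt_R0; lra).
  destruct (atan_bound (s / sqrt n)).
  pose proof (atan_sub_hitting_time_increasing s 0) as Hneg.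
  pose proof (atan_sub_hitting_time_increasing 0 s) as Hpos.
  rewrite Rdiv_0_l, atan_0, hitting_time_0 in Hneg, Hpos.
  destruct (Rtotal_order s 0) as [Hs | [-> | Hs]].
  - pose proof (hitting_time_increasing _ _ Hs). rewrite hitting_time_0 in H1.
    specialize (Hneg Hs). rewrite Rabs_left by lra. nra.
  - rewrite hitting_time_0, Rabs_R0. pose proof PI_RGT_0. nra.
  - pose proof (hitting_time_increasing _ _ Hs). rewrite hitting_time_0 in H1.
    specialize (Hpos Hs). rewrite Rabs_right by lra. nra.
Qed.

Lemma is_derive_orbit t :
  orbit_start n < t < orbit_end n -> is_derive (orbit n) t (rate n (orbit n t)).
Proof.
  intros Ht. rewrite <- (Rinv_inv (rate n (orbit n t))).
  exact (is_derive_inverse _ _ is_derive_hitting_time inv_rate_pos hitting_time_bounded t Ht).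
Qed.

Lemma orbit_start_lt s : orbit_start n < hitting_time n s.
Proof. exact (range_inf_lt _ _ is_derive_hitting_time inv_rate_pos hitting_time_bounded s). Qed.

Lemma lt_orbit_end s : hitting_time n s < orbit_end n.
Proof. exact (lt_range_sup _ _ is_derive_hitting_time inv_rate_pos hitting_time_bounded s). Qed.

Lemma orbit_start_lt_0_lt_orbit_end : orbit_start n < 0 < orbit_end n.
Proof. rewrite <- hitting_time_0. split; [apply orbit_start_lt | apply lt_orbit_end]. Qed.

Lemma lt_orbit V t :
  orbit_start n < t < orbit_end n -> hitting_time n V < t -> V < orbit n t.
Proof. exact (lt_inverse _ _ is_derive_hitting_time inv_rate_pos hitting_time_bounded V t). Qed.

Lemma orbit_lt V t :
  orbit_start n < t < orbit_end n -> t < hitting_time n V -> orbit n t < V.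
Proof. exact (inverse_lt _ _ is_derive_hitting_time inv_rate_pos hitting_time_bounded V t). Qed.

Lemma jet_0_pos v : 0 < jet n 0 v.
Proof. unfold jet, coef. rewrite Rmult_1_l. apply exp_pos. Qed.

Ltac jet_side_conditions v :=
  pose proof (pow4_div_nonneg v); pose proof (rate_ge_1 v);
  assert (0 <= v ^ 2 / n) by (apply Rdiv_le_0_compat; nra).

Lemma is_derive_jet k v :
  (k < 3)%nat -> is_derive (jet n k) v (jet n (S k) v / rate n v).
Proof.
  intros Hk. jet_side_conditions v. unfold jet, profile, height, coef.
  destruct k as [|[|[|k]]]; try lia; unfold rate in *; auto_derive;
    unfold Rdiv in *; simpl in *; set (S := sqrt _) in *;
    first [ repeat split; lra | field; repeat split; nra ].
Qed.

Lemma continuous_jet k v : continuous (jet n k) v.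
Proof.
  apply (ex_derive_continuous (jet n k)). jet_side_conditions v.
  unfold jet, profile, height, coef.
  destruct k as [|[|[|k]]]; unfold rate in *; auto_derive;
    unfold Rdiv in *; simpl in *; repeat split; lra.
Qed.

Lemma jet_identity v :
  jet n 3 v * jet n 0 v ^ 2 - 3 * jet n 2 v * jet n 1 v * jet n 0 v
  + 2 * (1 - / n ^ 2) * jet n 1 v ^ 3 = 0.
Proof. unfold jet, coef. field. lra. Qed.

Lemma is_derive_jet_orbit k t :
  (k < 3)%nat -> orbit_start n < t < orbit_end n ->
  is_derive (fun t => jet n k (orbit n t)) t (jet n (S k) (orbit n t)).
Proof.
  intros Hk Ht. pose proof (rate_ge_1 (orbit n t)).
  replace (jet n (S k) (orbit n t))
    with (scal (rate n (orbit n t)) (jet n (S k) (orbit n t) / rate n (orbit n t)))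
    by (unfold scal; simpl; unfold mult; simpl; field; lra).
  apply (is_derive_comp (jet n k) (orbit n)).
  - apply is_derive_jet, Hk.
  - apply is_derive_orbit, Ht.
Qed.

Lemma continuous_jet_orbit k t :
  orbit_start n < t < orbit_end n -> continuous (fun t => jet n k (orbit n t)) t.
Proof.
  intros Ht. apply (continuous_comp (orbit n) (jet n k)); [|apply continuous_jet].
  apply (ex_derive_continuous (orbit n)). eexists. apply is_derive_orbit, Ht.
Qed.

Lemma height_bounds v : 1 <= rate n v <= height n v /\ v ^ 2 <= n * height n v.
Proof.
  pose proof (rate_ge_1 v). unfold height.
  assert (0 <= v ^ 2 / n) by (apply Rdiv_le_0_compat; nra).
  assert (v ^ 2 = n * (v ^ 2 / n)) by (field; lra).
  repeat split; nra.
Qed.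

Lemma coef_sq_le k v : 1 <= n -> coef n k v ^ 2 <= 18 * (n + 1) ^ 3 * height n v ^ 3.
Proof.
  intros Hn1. destruct (height_bounds v) as [[hF hFH] hvH].
  set (H := height n v) in *. set (F := rate n v) in *.
  assert (hH3 : 1 <= H ^ 3) by (simpl; nra).
  assert (hH2 : H ^ 2 <= H ^ 3) by (simpl; nra).
  assert (hHH : H <= H ^ 3) by (simpl; nra).
  set (N := 18 * (n + 1) ^ 3).
  assert (hN : 1 <= N /\ n <= N /\ (n + 1) ^ 2 <= N /\ 18 * (n + n ^ 3) <= N)
    by (unfold N; simpl; repeat split; nra).
  assert (Hmono : forall c, 0 <= c -> c <= N -> c * H ^ 3 <= N * H ^ 3)
    by (intros; apply Rmult_le_compat_r; lra).
  assert (hv2 : 0 <= v ^ 2) by nra.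
  destruct k as [|[|[|k]]]; unfold coef; fold F.
  - specialize (Hmono 1 ltac:(lra) ltac:(apply hN)). rewrite pow1. lra.
  - specialize (Hmono n ltac:(lra) ltac:(apply hN)).
    assert (n * H <= n * H ^ 3) by (apply Rmult_le_compat_l; lra).
    replace ((- v) ^ 2) with (v ^ 2) by ring. lra.
  - assert (h1 : 0 <= (n + 1) * H - (v ^ 2 - F)) by nra.
    assert (h2 : 0 <= (n + 1) * H + (v ^ 2 - F)) by nra.
    assert ((v ^ 2 - F) ^ 2 <= (n + 1) ^ 2 * H ^ 2) by nra.
    assert ((n + 1) ^ 2 * H ^ 2 <= (n + 1) ^ 2 * H ^ 3) by (apply Rmult_le_compat_l; nra).
    specialize (Hmono ((n + 1) ^ 2) ltac:(nra) ltac:(apply hN)). lra.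
  - assert (Hc : 0 <= 2 / n ^ 2 <= 2).
    { split; [apply Rdiv_le_0_compat; nra|].
      apply Rmult_le_reg_l with (n ^ 2); [nra|]. field_simplify; nra. }
    replace (3 * v * F - 2 * v ^ 3 / n ^ 2 - v ^ 3)
      with (3 * v * F - (2 / n ^ 2 + 1) * v ^ 3) by (field; lra).
    set (c := 2 / n ^ 2 + 1) in *.
    assert (A1 : (3 * v * F - c * v ^ 3) ^ 2 <= 18 * (v ^ 2 * F ^ 2) + 2 * c ^ 2 * (v ^ 2) ^ 3)
      by (pose proof (pow2_ge_0 (3 * v * F + c * v ^ 3)); nra).
    assert (A2 : v ^ 2 * F ^ 2 <= n * H ^ 3)
      by (replace (n * H ^ 3) with (n * H * H ^ 2) by ring; apply Rmult_le_compat; nra).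
    assert (A3 : (v ^ 2) ^ 3 <= n ^ 3 * H ^ 3)
      by (replace (n ^ 3 * H ^ 3) with ((n * H) ^ 3) by ring; apply pow_incr; nra).
    assert (A4 : c ^ 2 <= 9) by (assert (1 <= c <= 3) by (unfold c; lra); nra).
    assert (A5 : c ^ 2 * (v ^ 2) ^ 3 <= 9 * (n ^ 3 * H ^ 3)) by (apply Rmult_le_compat; nra).
    specialize (Hmono (18 * (n + n ^ 3)) ltac:(simpl; nra) ltac:(apply hN)). lra.
Qed.

Lemma jet_sq_le k v :
  1 <= n -> jet n k v ^ 2 <= 18 * (n + 1) ^ 3 * exp ((3 - n) * ln (height n v)).
Proof.
  intros Hn1.
  assert (HH : 0 < height n v) by (pose proof (height_bounds v); lra).
  assert (Hprof : profile n v ^ 2 = exp (- n * ln (height n v)))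
    by (unfold profile; simpl; rewrite Rmult_1_r, <- exp_plus; f_equal; field).
  assert (Hcube : height n v ^ 3 = exp (3 * ln (height n v))).
  { rewrite <- (exp_ln (height n v)) at 1 by exact HH. simpl.
    rewrite Rmult_1_r, <- !exp_plus. f_equal. ring. }
  unfold jet. rewrite Rpow_mult_distr, Hprof.
  replace ((3 - n) * ln (height n v)) with (3 * ln (height n v) + - n * ln (height n v))
    by ring.
  rewrite exp_plus, <- Hcube, <- Rmult_assoc.
  apply Rmult_le_compat_r; [apply Rlt_le, exp_pos | apply coef_sq_le, Hn1].
Qed.

Lemma jet_vanishes_at_infinity k e :
  3 < n -> 0 < e -> exists V, forall v, V <= Rabs v -> Rabs (jet n k v) < e.
Proof.
  intros Hn3 He. set (K := 18 * (n + 1) ^ 3).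
  assert (HK : 0 < K) by (unfold K; nra).
  set (lam := ln (e ^ 2 / K) / (3 - n)).
  exists (sqrt (n * exp lam)). intros v Hv.
  assert (Hv2 : n * exp lam <= v ^ 2).
  { rewrite <- pow2_abs. rewrite <- (sqrt_sqrt (n * exp lam))
      by (pose proof (exp_pos lam); nra).
    pose proof (sqrt_pos (n * exp lam)). nra. }
  assert (Hlam : lam < ln (height n v)).
  { rewrite <- (ln_exp lam). apply ln_increasing; [apply exp_pos|].
    pose proof (rate_ge_1 v). unfold height.
    assert (exp lam <= v ^ 2 / n)
      by (apply Rmult_le_reg_l with n; [lra|]; field_simplify; lra).
    lra. }
  assert (Hexp : exp ((3 - n) * ln (height n v)) < e ^ 2 / K).
  { rewrite <- (exp_ln (e ^ 2 / K)) by (apply Rdiv_lt_0_compat; nra).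
    apply exp_increasing.
    replace (ln (e ^ 2 / K)) with ((3 - n) * lam) by (unfold lam; field; lra). nra. }
  pose proof (jet_sq_le k v ltac:(lra)) as Hsq. fold K in Hsq.
  assert (Hlt : jet n k v ^ 2 < e ^ 2).
  { apply Rmult_lt_compat_l with (r := K) in Hexp; [|exact HK].
    replace (K * (e ^ 2 / K)) with (e ^ 2) in Hexp by (field; lra). lra. }
  rewrite <- pow2_abs in Hlt. pose proof (Rabs_pos (jet n k v)). nra.
Qed.

End Orbit.

(** * Extension by zero, the bump and the step *)

Lemma Rabs_between_le a h c :
  Rmin a (a + h) <= c <= Rmax a (a + h) -> Rabs (c - a) <= Rabs h.
Proof.
  intros Hc. destruct (Rle_or_lt 0 h).
  - rewrite Rmin_left, Rmax_right in Hc by lra. rewrite !Rabs_right; lra.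
  - rewrite Rmin_right, Rmax_left in Hc by lra. rewrite (Rabs_left h) by lra.
    apply Rabs_le. lra.
Qed.

Lemma is_derive_of_punctured_limit (f g : R -> R) a d :
  0 < d -> (forall x, continuous f x) ->
  (forall x, 0 < Rabs (x - a) < d -> is_derive f x (g x)) ->
  continuous g a -> is_derive f a (g a).
Proof.
  intros Hd Hf Hfg Hg. apply is_derive_Reals. intros e He.
  apply continuity_pt_filterlim in Hg. rewrite continuity_pt_locally in Hg.
  destruct (Hg (mkposreal e He)) as [[d' Hd'] Hgd']. simpl in Hgd'.
  exists (mkposreal (Rmin d d') (Rmin_pos _ _ Hd Hd')). simpl. intros h Hh0 Hh.
  assert (Hhd : Rabs h < d) by (eapply Rlt_le_trans; [exact Hh | apply Rmin_l]).
  assert (Hhd' : Rabs h < d') by (eapply Rlt_le_trans; [exact Hh | apply Rmin_r]).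
  destruct (MVT_gen f a (a + h) g) as [c [Hc Hmvt]].
  - intros x Hx. apply Hfg. split.
    + apply Rabs_pos_lt. intros Hxa.
      destruct (Rle_or_lt 0 h) as [H | H].
      * rewrite Rmin_left in Hx by lra. lra.
      * rewrite Rmax_left in Hx by lra. lra.
    + apply Rle_lt_trans with (Rabs h); [|exact Hhd].
      apply Rabs_between_le. lra.
  - intros x _. apply continuity_pt_filterlim, Hf.
  - replace ((f (a + h) - f a) / h - g a) with (g c - g a)
      by (rewrite Hmvt; field; exact Hh0).
    apply Hgd'. apply Rle_lt_trans with (Rabs h); [|exact Hhd'].
    apply Rabs_between_le, Hc.
Qed.

Definition extend_by_zero (a b : R) (f : R -> R) (t : R) : R :=
  if Rlt_dec a t then if Rlt_dec t b then f t else 0 else 0.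

Lemma extend_by_zero_in a b f t : a < t < b -> extend_by_zero a b f t = f t.
Proof.
  intros [Ha Hb]. unfold extend_by_zero.
  destruct Rlt_dec; [|lra]. destruct Rlt_dec; [reflexivity|lra].
Qed.

Lemma extend_by_zero_out a b f t : ~ (a < t < b) -> extend_by_zero a b f t = 0.
Proof.
  intros Hout. unfold extend_by_zero.
  destruct Rlt_dec; [|reflexivity]. destruct Rlt_dec; [|reflexivity]. tauto.
Qed.

Lemma extend_by_zero_locally_in a b f t :
  a < t < b -> locally t (fun s => extend_by_zero a b f s = f s).
Proof.
  intros Ht. apply filter_imp with (P := fun s => a < s < b).
  - intros s Hs. apply extend_by_zero_in, Hs.
  - apply (locally_interval _ t a b); simpl; try lra. intros s Hs1 Hs2. split; assumption.
Qed.

Lemma extend_by_zero_locally_out a b f t :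
  t < a \/ b < t -> locally t (fun s => extend_by_zero a b f s = 0).
Proof.
  intros [Ht | Ht].
  - apply filter_imp with (P := fun s => s < a).
    + intros s Hs. apply extend_by_zero_out. lra.
    + apply (locally_interval _ t m_infty a); easy.
  - apply filter_imp with (P := fun s => b < s).
    + intros s Hs. apply extend_by_zero_out. lra.
    + apply (locally_interval _ t b p_infty); easy.
Qed.

Section ExtendByZero.

Variables (a b : R) (f : R -> R).
Hypothesis a_lt_b : a < b.
Hypothesis f_cont : forall t, a < t < b -> continuous f t.
Hypothesis f_vanishes_at_ends : forall e, 0 < e -> exists d, 0 < d /\
  forall t, a < t < b -> t < a + d \/ b - d < t -> Rabs (f t) < e.

Lemma continuous_extend_by_zero_at_ends t :
  t = a \/ t = b -> continuous (extend_by_zero a b f) t.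
Proof.
  intros Ht. apply continuity_pt_filterlim, continuity_pt_locally. intros [e He].
  destruct (f_vanishes_at_ends e He) as [d [Hd Hfd]].
  assert (Hba : 0 < b - a) by lra.
  exists (mkposreal (Rmin d (b - a)) (Rmin_pos _ _ Hd Hba)). simpl.
  intros s Hs. apply Rabs_lt_between' in Hs.
  pose proof (Rmin_l d (b - a)). pose proof (Rmin_r d (b - a)).
  rewrite (extend_by_zero_out a b f t) by lra. rewrite Rminus_0_r.
  destruct (Rlt_dec a s) as [Has | Has]; [destruct (Rlt_dec s b) as [Hsb | Hsb]|].
  - rewrite extend_by_zero_in by lra. apply Hfd; lra.
  - rewrite extend_by_zero_out, Rabs_R0 by lra. exact He.
  - rewrite extend_by_zero_out, Rabs_R0 by lra. exact He.
Qed.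

Lemma continuous_extend_by_zero t : continuous (extend_by_zero a b f) t.
Proof.
  destruct (Rtotal_order t a) as [Ht | [Ht | Ht]];
    [|apply continuous_extend_by_zero_at_ends; auto|].
  - apply (continuous_ext_loc _ (fun _ => 0)); [|apply continuous_const].
    apply filter_imp with (2 := extend_by_zero_locally_out a b f t (or_introl Ht)).
    intros; symmetry; assumption.
  - destruct (Rtotal_order t b) as [Htb | [Htb | Htb]];
      [|apply continuous_extend_by_zero_at_ends; auto|].
    + apply (continuous_ext_loc _ f); [|apply f_cont; lra].
      apply filter_imp with (2 := extend_by_zero_locally_in a b f t (conj Ht Htb)).
      intros; symmetry; assumption.
    + apply (continuous_ext_loc _ (fun _ => 0)); [|apply continuous_const].
      apply filter_imp with (2 := extend_by_zero_locally_out a b f t (or_intror Htb)).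
      intros; symmetry; assumption.
Qed.

End ExtendByZero.

Lemma is_derive_extend_by_zero a b f g t :
  a < b -> (forall t, a < t < b -> is_derive f t (g t)) ->
  (forall t, continuous (extend_by_zero a b f) t) ->
  (forall t, continuous (extend_by_zero a b g) t) ->
  is_derive (extend_by_zero a b f) t (extend_by_zero a b g t).
Proof.
  intros Hab Hfg Hf Hg.
  assert (Hoff : forall t, t <> a -> t <> b ->
            is_derive (extend_by_zero a b f) t (extend_by_zero a b g t)).
  { intros s Hsa Hsb. destruct (Rlt_dec a s); [destruct (Rlt_dec s b)|].
    1: { rewrite extend_by_zero_in by lra.
         apply (is_derive_ext_loc f); [|apply Hfg; lra].
         apply filter_imp with (2 := extend_by_zero_locally_in a b f s ltac:(lra)).
         intros; symmetry; assumption. }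
    all: rewrite extend_by_zero_out by lra;
      apply (is_derive_ext_loc (fun _ => 0));
      [|apply (@is_derive_const R_AbsRing R_NormedModule)];
      apply filter_imp with (2 := extend_by_zero_locally_out a b f s ltac:(lra));
      intros; symmetry; assumption. }
  destruct (Req_dec t a) as [-> | Ha]; [|destruct (Req_dec t b) as [-> | Hb]; auto].
  - apply (is_derive_of_punctured_limit _ _ a (b - a)); auto; [lra|].
    intros x [Hx0 Hx]. apply Hoff.
    + intros ->. rewrite Rminus_diag, Rabs_R0 in Hx0. lra.
    + intros ->. rewrite Rabs_right in Hx; lra.
  - apply (is_derive_of_punctured_limit _ _ b (b - a)); auto; [lra|].
    intros x [Hx0 Hx]. apply Hoff.
    + intros ->. rewrite Rabs_left in Hx; lra.
    + intros ->. rewrite Rminus_diag, Rabs_R0 in Hx0. lra.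
Qed.

Definition bump (n : R) (k : nat) : R -> R :=
  extend_by_zero (orbit_start n) (orbit_end n) (fun t => jet n k (orbit n t)).

Section Bump.

Variable n : R.
Hypothesis n_gt_3 : 3 < n.

Let n_pos : 0 < n. Proof. lra. Qed.

Lemma orbit_start_lt_end : orbit_start n < orbit_end n.
Proof. pose proof (orbit_start_lt_0_lt_orbit_end n n_pos). lra. Qed.

Lemma jet_orbit_vanishes_at_ends k e : 0 < e -> exists d, 0 < d /\
  forall t, orbit_start n < t < orbit_end n ->
  t < orbit_start n + d \/ orbit_end n - d < t -> Rabs (jet n k (orbit n t)) < e.
Proof.
  intros He. destruct (jet_vanishes_at_infinity n n_pos k e n_gt_3 He) as [V HV].
  pose proof (RRle_abs V). pose proof (Rabs_pos V). set (W := Rabs V) in *.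
  pose proof (orbit_start_lt n n_pos (- W)). pose proof (lt_orbit_end n n_pos W).
  exists (Rmin (hitting_time n (- W) - orbit_start n) (orbit_end n - hitting_time n W)).
  split; [apply Rmin_pos; lra|]. intros t Ht Hends. apply HV.
  pose proof (Rmin_l (hitting_time n (- W) - orbit_start n) (orbit_end n - hitting_time n W)).
  pose proof (Rmin_r (hitting_time n (- W) - orbit_start n) (orbit_end n - hitting_time n W)).
  destruct Hends as [Hlo | Hhi].
  - pose proof (orbit_lt n n_pos (- W) t Ht ltac:(lra)).
    rewrite Rabs_left; lra.
  - pose proof (lt_orbit n n_pos W t Ht ltac:(lra)).
    rewrite Rabs_right; lra.
Qed.

Lemma continuous_bump k t : continuous (bump n k) t.
Proof.
  apply continuous_extend_by_zero.
  - exact orbit_start_lt_end.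
  - intros; apply continuous_jet_orbit; auto.
  - intros; apply jet_orbit_vanishes_at_ends; auto.
Qed.

Lemma is_derive_bump k t : (k < 3)%nat -> is_derive (bump n k) t (bump n (S k) t).
Proof.
  intros Hk. apply is_derive_extend_by_zero.
  - exact orbit_start_lt_end.
  - intros; apply is_derive_jet_orbit; auto.
  - apply continuous_bump.
  - apply continuous_bump.
Qed.

Lemma bump_nonneg t : 0 <= bump n 0 t.
Proof.
  unfold bump, extend_by_zero. destruct Rlt_dec; [destruct Rlt_dec|]; try lra.
  apply Rlt_le, jet_0_pos.
Qed.

Definition bump_primitive (t : R) : R := RInt (bump n 0) (orbit_start n) t.
Definition bump_mass : R := bump_primitive (orbit_end n).
Definition bump_tower (k : nat) : R -> R :=
  match k with O => bump_primitive | S j => bump n j end.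

Lemma ex_RInt_bump a b : ex_RInt (bump n 0) a b.
Proof. apply (ex_RInt_continuous (V := R_CompleteNormedModule)). intros; apply continuous_bump. Qed.

Lemma derivative_tower_bump : derivative_tower bump_tower.
Proof.
  split; [|intros; apply continuous_bump].
  intros [|k] x Hk; simpl.
  - apply (is_derive_RInt (bump n 0) bump_primitive (orbit_start n)); [|apply continuous_bump].
    apply filter_forall. intros b. apply (RInt_correct (V := R_CompleteNormedModule)), ex_RInt_bump.
  - apply is_derive_bump. lia.
Qed.

Lemma tower_solves_B_bump : tower_solves_B n bump_tower.
Proof.
  intros t. simpl. unfold bump.
  destruct (Rlt_dec (orbit_start n) t); [destruct (Rlt_dec t (orbit_end n))|].
  1: rewrite !extend_by_zero_in by lra; apply (jet_identity n n_pos).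
  all: rewrite !extend_by_zero_out by lra; ring.
Qed.

Lemma bump_primitive_diff a b : bump_primitive b - bump_primitive a = RInt (bump n 0) a b.
Proof.
  unfold bump_primitive.
  rewrite <- (RInt_Chasles (V := R_CompleteNormedModule) (bump n 0) (orbit_start n) a b)
    by apply ex_RInt_bump.
  unfold plus; simpl. ring.
Qed.

Lemma bump_primitive_le a b : a <= b -> bump_primitive a <= bump_primitive b.
Proof.
  intros Hab. enough (0 <= bump_primitive b - bump_primitive a) by lra.
  rewrite bump_primitive_diff. apply RInt_ge_0; auto using ex_RInt_bump.
  intros; apply bump_nonneg.
Qed.

Lemma RInt_bump_outside a b :
  a <= b -> (b <= orbit_start n \/ orbit_end n <= a) -> RInt (bump n 0) a b = 0.
Proof.
  intros Hab Hout. rewrite (RInt_ext _ (fun _ => 0)).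
  - rewrite RInt_const. unfold scal; simpl; unfold mult; simpl. ring.
  - intros x Hx. rewrite Rmin_left, Rmax_right in Hx by lra.
    apply extend_by_zero_out. lra.
Qed.

Lemma bump_primitive_left t : t <= orbit_start n -> bump_primitive t = 0.
Proof.
  intros Ht. unfold bump_primitive.
  rewrite <- (opp_RInt_swap (V := R_CompleteNormedModule)) by apply ex_RInt_bump.
  rewrite RInt_bump_outside by lra. apply Ropp_0.
Qed.

Lemma bump_primitive_right t : orbit_end n <= t -> bump_primitive t = bump_mass.
Proof.
  intros Ht. unfold bump_mass.
  enough (bump_primitive t - bump_primitive (orbit_end n) = 0) by lra.
  rewrite bump_primitive_diff. apply RInt_bump_outside; lra.
Qed.

Lemma bump_mass_pos : 0 < bump_mass.
Proof.
  unfold bump_mass, bump_primitive. apply RInt_gt_0.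
  - exact orbit_start_lt_end.
  - intros x Hx. unfold bump. rewrite extend_by_zero_in by exact Hx.
    apply jet_0_pos.
  - intros; apply continuous_bump.
Qed.

End Bump.

Definition step_tower (n : R) : nat -> R -> R :=
  tower_affine 0 (/ bump_mass n) (orbit_end n - orbit_start n) (orbit_start n) (bump_tower n).

Definition step (n : R) : R -> R := step_tower n 0%nat.

Section Step.

Variable n : R.
Hypothesis n_gt_3 : 3 < n.

Lemma step_eq s :
  step n s = / bump_mass n *
             bump_primitive n ((orbit_end n - orbit_start n) * s + orbit_start n).
Proof. unfold step, step_tower, tower_affine. simpl. ring. Qed.

Lemma step_left s : s <= 0 -> step n s = 0.
Proof.
  intros Hs. pose proof (orbit_start_lt_end n n_gt_3).
  rewrite step_eq, bump_primitive_left by nra. ring.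
Qed.

Lemma step_right s : 1 <= s -> step n s = 1.
Proof.
  intros Hs. pose proof (orbit_start_lt_end n n_gt_3). pose proof (bump_mass_pos n n_gt_3).
  rewrite step_eq, bump_primitive_right by nra. field. lra.
Qed.

Lemma step_bounds s : 0 <= step n s <= 1.
Proof.
  pose proof (bump_mass_pos n n_gt_3). rewrite step_eq.
  set (t := (orbit_end n - orbit_start n) * s + orbit_start n).
  assert (Hlo : 0 <= bump_primitive n t).
  { destruct (Rle_or_lt t (orbit_start n)).
    - rewrite bump_primitive_left by auto. lra.
    - rewrite <- (bump_primitive_left n n_gt_3 (orbit_start n)) by lra.
      apply bump_primitive_le; auto; lra. }
  assert (Hhi : bump_primitive n t <= bump_mass n).
  { destruct (Rle_or_lt (orbit_end n) t).
    - rewrite bump_primitive_right by auto. lra.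
    - apply bump_primitive_le; auto; lra. }
  split.
  - apply Rmult_le_pos; [apply Rlt_le, Rinv_0_lt_compat|]; lra.
  - apply Rmult_le_reg_l with (bump_mass n); [lra|]. field_simplify; lra.
Qed.

Lemma step_tower_flat s : s <= 0 \/ 1 <= s -> tower_flat_at (step_tower n) s.
Proof.
  intros Hs. pose proof (orbit_start_lt_end n n_gt_3).
  unfold tower_flat_at, step_tower, tower_affine, bump_tower, bump.
  rewrite !extend_by_zero_out by (destruct Hs; nra).
  repeat split; ring.
Qed.

End Step.

Definition step_between (n p q vp vq : R) : nat -> R -> R :=
  tower_affine vp (vq - vp) (/ (q - p)) (- p / (q - p)) (step_tower n).

Lemma step_between_0 n p q vp vq x : p < q ->
  step_between n p q vp vq 0%nat x = vp + (vq - vp) * step n ((x - p) / (q - p)).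
Proof.
  intros Hpq. unfold step_between, tower_affine, step. simpl.
  replace (/ (q - p) * x + - p / (q - p)) with ((x - p) / (q - p)) by (field; lra). ring.
Qed.

Lemma step_between_flat n p q vp vq x : 3 < n -> p < q -> (x <= p \/ q <= x) ->
  tower_flat_at (step_between n p q vp vq) x.
Proof.
  intros Hn Hpq Hx.
  destruct (step_tower_flat n Hn ((x - p) / (q - p))) as [H1 [H2 [H3 H4]]].
  { destruct Hx; [left | right].
    - apply Rmult_le_0_r; [lra | apply Rlt_le, Rinv_0_lt_compat; lra].
    - apply Rmult_le_reg_l with (q - p); [lra|]. field_simplify; lra. }
  unfold tower_flat_at, step_between, tower_affine.
  replace (/ (q - p) * x + - p / (q - p)) with ((x - p) / (q - p)) by (field; lra).
  rewrite H1, H2, H3, H4. repeat split; ring.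
Qed.

Lemma glue_two_steps n p g q vp vg vq : 3 < n -> p < g < q ->
  exists f, derivative_tower f /\ tower_solves_B n f /\
    (forall x, x <= g -> f 0%nat x = vp + (vg - vp) * step n ((x - p) / (g - p))) /\
    (forall x, g <= x -> f 0%nat x = vg + (vq - vg) * step n ((x - g) / (q - g))).
Proof.
  intros Hn Hpgq.
  exists (tower_plus (step_between n p g vp vg) (step_between n g q 0 (vq - vg))).
  assert (Htower : forall p q vp vq, derivative_tower (step_between n p q vp vq))
    by (intros; apply derivative_tower_affine, derivative_tower_affine, derivative_tower_bump; lra).
  assert (HB : forall p q vp vq, tower_solves_B n (step_between n p q vp vq))
    by (intros; apply tower_solves_B_affine, tower_solves_B_affine, tower_solves_B_bump; lra).
  split; [|split; [|split]].
  - apply derivative_tower_plus; auto.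
  - apply tower_solves_B_plus; auto. intros x. destruct (Rle_or_lt x g).
    + right. apply step_between_flat; auto; lra.
    + left. apply step_between_flat; auto; lra.
  - intros x Hx. unfold tower_plus. rewrite !step_between_0 by lra.
    rewrite (step_left n Hn ((x - g) / (q - g))); [ring|].
    apply Rmult_le_0_r; [lra | apply Rlt_le, Rinv_0_lt_compat; lra].
  - intros x Hx. unfold tower_plus. rewrite !step_between_0 by lra.
    rewrite (step_right n Hn ((x - p) / (g - p))); [ring|].
    apply Rmult_le_reg_l with (g - p); [lra|]. field_simplify; lra.
Qed.

(** * Interpolation on a grid *)

Lemma Int_part_bounds x : IZR (Int_part x) <= x < IZR (Int_part x) + 1.
Proof. destruct (base_Int_part x). lra. Qed.

Lemma Int_part_unique z x : IZR z <= x < IZR z + 1 -> Int_part x = z.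
Proof. intros Hx. symmetry. apply Int_part_spec. lra. Qed.

(* The unit interval [k, k + 1] is cut into [N k] cells of length [1 / N k]. *)
Section Grid.

Variable N : Z -> nat.
Hypothesis N_pos : forall k, (0 < N k)%nat.

Definition mesh (t : R) : R := INR (N (Int_part t)).
Definition cell_index (t : R) : Z := Int_part ((t - IZR (Int_part t)) * mesh t).
Definition cell_lo (t : R) : R := IZR (Int_part t) + IZR (cell_index t) / mesh t.
Definition cell_hi (t : R) : R := IZR (Int_part t) + (IZR (cell_index t) + 1) / mesh t.

Lemma N_ge_1 k : 1 <= INR (N k).
Proof. apply (le_INR 1), N_pos. Qed.

Lemma cell_bounds t :
  0 <= IZR (cell_index t) /\ IZR (cell_index t) + 1 <= mesh t /\
  cell_lo t <= t < cell_hi t /\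
  IZR (Int_part t) <= cell_lo t /\ cell_hi t <= IZR (Int_part t) + 1 /\
  cell_hi t - cell_lo t = / mesh t.
Proof.
  pose proof (N_ge_1 (Int_part t)) as HN1. fold (mesh t) in HN1.
  pose proof (Int_part_bounds t) as Hk.
  unfold cell_lo, cell_hi, cell_index.
  set (k := IZR (Int_part t)) in *. set (M := mesh t) in *.
  pose proof (Int_part_bounds ((t - k) * M)) as Hj.
  set (j := Int_part ((t - k) * M)) in *.
  assert (Hj0 : 0 <= IZR j).
  { apply IZR_le. assert (-1 < IZR j) by nra. apply lt_IZR in H. lia. }
  assert (HjM : IZR j + 1 <= M).
  { assert (IZR j < M) by nra. unfold M, mesh in *. rewrite INR_IZR_INZ in *.
    rewrite <- plus_IZR. apply IZR_le. apply lt_IZR in H. lia. }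
  repeat split; auto.
  - apply Rmult_le_reg_r with M; [lra|]. field_simplify; lra.
  - apply Rmult_lt_reg_r with M; [lra|]. field_simplify; lra.
  - assert (0 <= IZR j / M) by (apply Rdiv_le_0_compat; lra). lra.
  - assert ((IZR j + 1) / M <= 1)
      by (apply Rmult_le_reg_r with M; [lra|]; field_simplify; lra). lra.
  - field. lra.
Qed.

Lemma cell_of k i s :
  0 <= IZR i -> IZR i + 1 <= INR (N k) ->
  IZR k + IZR i / INR (N k) <= s < IZR k + (IZR i + 1) / INR (N k) ->
  cell_lo s = IZR k + IZR i / INR (N k) /\ cell_hi s = IZR k + (IZR i + 1) / INR (N k).
Proof.
  intros Hi0 HiN Hs. pose proof (N_ge_1 k) as HN1. set (M := INR (N k)) in *.
  assert (Hk : Int_part s = k).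
  { apply Int_part_unique.
    assert (0 <= IZR i / M) by (apply Rdiv_le_0_compat; lra).
    assert ((IZR i + 1) / M <= 1)
      by (apply Rmult_le_reg_r with M; [lra|]; field_simplify; lra).
    lra. }
  assert (HM : mesh s = M) by (unfold mesh; rewrite Hk; reflexivity).
  assert (Hi : cell_index s = i).
  { unfold cell_index. rewrite Hk, HM. apply Int_part_unique.
    destruct Hs as [Hs1 Hs2]. split.
    - apply Rmult_le_reg_r with (/ M); [apply Rinv_0_lt_compat; lra|].
      field_simplify; lra.
    - apply Rmult_lt_reg_r with (/ M); [apply Rinv_0_lt_compat; lra|].
      field_simplify; lra. }
  unfold cell_lo, cell_hi. rewrite Hk, Hi, HM. auto.
Qed.

Lemma cell_of_same t s :
  cell_lo t <= s < cell_hi t -> cell_lo s = cell_lo t /\ cell_hi s = cell_hi t.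
Proof.
  intros Hs. destruct (cell_bounds t) as [H0 [H1 _]].
  apply (cell_of (Int_part t) (cell_index t) s); auto.
Qed.

Lemma cell_left_neighbour t :
  exists p, p < cell_lo t /\
    forall s, p <= s < cell_lo t -> cell_lo s = p /\ cell_hi s = cell_lo t.
Proof.
  destruct (cell_bounds t) as [H0 [H1 _]].
  pose proof (N_ge_1 (Int_part t)). fold (mesh t) in H.
  destruct (Rle_or_lt 1 (IZR (cell_index t))) as [Hj | Hj].
  - exists (IZR (Int_part t) + IZR (cell_index t - 1) / mesh t).
    rewrite minus_IZR. split.
    + unfold cell_lo. apply Rplus_lt_compat_l, Rmult_lt_compat_r;
        [apply Rinv_0_lt_compat|]; lra.
    + intros s Hs. pose proof (cell_of (Int_part t) (cell_index t - 1) s) as Hc.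
      rewrite minus_IZR in Hc. unfold cell_lo, mesh in *.
      replace (IZR (cell_index t) - 1 + 1) with (IZR (cell_index t)) in Hc by ring.
      apply Hc; lra.
  - assert (Hj0 : cell_index t = 0%Z).
    { apply le_IZR in H0. assert (IZR (cell_index t) < IZR 1) by (simpl; lra).
      apply lt_IZR in H2. lia. }
    set (k := (Int_part t - 1)%Z). pose proof (N_ge_1 k).
    set (i := (Z.of_nat (N k) - 1)%Z).
    assert (Hi : IZR i = INR (N k) - 1)
      by (unfold i; rewrite minus_IZR, <- INR_IZR_INZ; reflexivity).
    assert (Hlo : cell_lo t = IZR (Int_part t))
      by (unfold cell_lo; rewrite Hj0; simpl; field; lra).
    assert (Hend : IZR k + (IZR i + 1) / INR (N k) = IZR (Int_part t))
      by (unfold k at 1; rewrite minus_IZR, Hi; field; lra).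
    exists (IZR k + IZR i / INR (N k)). rewrite Hlo. split.
    + rewrite <- Hend. apply Rplus_lt_compat_l, Rmult_lt_compat_r;
        [apply Rinv_0_lt_compat|]; lra.
    + intros s Hs. rewrite <- Hend. apply cell_of; [rewrite Hi; lra | lra | lra].
Qed.

End Grid.

Definition interpolant (n : R) (phi : R -> R) (N : Z -> nat) (t : R) : R :=
  phi (cell_lo N t) + (phi (cell_hi N t) - phi (cell_lo N t)) *
                      step n ((t - cell_lo N t) / (cell_hi N t - cell_lo N t)).

Lemma interpolant_local_tower n phi N t :
  3 < n -> (forall k, (0 < N k)%nat) ->
  exists f, derivative_tower f /\ tower_solves_B n f /\
            locally t (fun s => f 0%nat s = interpolant n phi N s).
Proof.
  intros Hn HN. destruct (cell_bounds N HN t) as [_ [_ [Ht _]]].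
  destruct (cell_left_neighbour N HN t) as [p [Hp Hleft]].
  set (g := cell_lo N t) in *. set (q := cell_hi N t) in *.
  destruct (glue_two_steps n p g q (phi p) (phi g) (phi q) Hn ltac:(lra))
    as [f [Hf [HB [Hl Hr]]]].
  exists f. split; [exact Hf|]. split; [exact HB|].
  apply filter_imp with (P := fun s => p < s < q).
  - intros s Hs. unfold interpolant. destruct (Rlt_or_le s g) as [Hsg | Hsg].
    + destruct (Hleft s ltac:(lra)) as [-> ->]. apply Hl. lra.
    + destruct (cell_of_same N HN t s ltac:(fold g q; lra)) as [-> ->]. apply Hr. exact Hsg.
  - apply (locally_interval _ t p q); simpl; try lra. intros s Hs1 Hs2. split; assumption.
Qed.

Lemma fine_mesh (phi eps : R -> R) (k : Z) :
  (forall t, continuous phi t) -> (forall t, continuous eps t) -> (forall t, 0 < eps t) ->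
  exists M : nat, (0 < M)%nat /\ forall s t u,
    IZR k <= s <= IZR k + 1 -> IZR k <= t <= IZR k + 1 -> IZR k <= u <= IZR k + 1 ->
    Rabs (s - t) <= / INR M -> 2 * Rabs (phi s - phi t) < eps u.
Proof.
  intros Hphi Heps Hpos.
  destruct (continuity_ab_min eps (IZR k) (IZR k + 1)) as [umin [Hmin _]]; [lra| |].
  { intros c _. apply continuity_pt_filterlim, Heps. }
  pose proof (Hpos umin) as Hm.
  destruct (Heine phi (fun c => IZR k <= c <= IZR k + 1) (compact_P3 _ _))
    with (mkposreal (eps umin / 2) ltac:(lra)) as [d Hd].
  { intros x _. apply continuity_pt_filterlim, Hphi. }
  destruct (archimed_cor1 d (cond_pos d)) as [M [HM1 HM2]].
  exists M. split; [exact HM2|]. intros s t u Hs Ht Hu Hst.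
  assert (Rabs (phi s - phi t) < eps umin / 2) by (apply (Hd s t Hs Ht); lra).
  pose proof (Hmin u Hu). lra.
Qed.

Lemma interpolant_close n phi eps N t :
  3 < n -> (forall k, (0 < N k)%nat /\ forall s t u,
    IZR k <= s <= IZR k + 1 -> IZR k <= t <= IZR k + 1 -> IZR k <= u <= IZR k + 1 ->
    Rabs (s - t) <= / INR (N k) -> 2 * Rabs (phi s - phi t) < eps u) ->
  Rabs (interpolant n phi N t - phi t) < eps t.
Proof.
  intros Hn HN. assert (Hpos : forall k, (0 < N k)%nat) by apply HN.
  destruct (cell_bounds N Hpos t) as [_ [_ [Ht [Hlo [Hhi Hwidth]]]]].
  pose proof (Int_part_bounds t). destruct (HN (Int_part t)) as [_ Hclose].
  pose proof (N_ge_1 N Hpos (Int_part t)). fold (mesh N t) in H0.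
  assert (Hw : 0 < / mesh N t) by (apply Rinv_0_lt_compat; lra).
  set (p := cell_lo N t) in *. set (q := cell_hi N t) in *.
  assert (A1 : 2 * Rabs (phi p - phi t) < eps t).
  { apply Hclose; try lra. rewrite Rabs_left1 by lra. unfold mesh in Hwidth. lra. }
  assert (A2 : 2 * Rabs (phi q - phi p) < eps t).
  { apply Hclose; try lra. rewrite Rabs_right by lra. unfold mesh in Hwidth. lra. }
  pose proof (step_bounds n Hn ((t - p) / (q - p))) as HS.
  unfold interpolant. fold p q.
  replace (phi p + (phi q - phi p) * step n ((t - p) / (q - p)) - phi t)
    with ((phi p - phi t) + (phi q - phi p) * step n ((t - p) / (q - p))) by ring.
  eapply Rle_lt_trans; [apply Rabs_triang|]. rewrite Rabs_mult.
  rewrite (Rabs_right (step n _)) by lra.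
  pose proof (Rabs_pos (phi q - phi p)).
  assert (Rabs (phi q - phi p) * step n ((t - p) / (q - p)) <= Rabs (phi q - phi p)) by nra.
  lra.
Qed.

Theorem theorem4 (n : R) (hn : 3 < n) :
  forall (phi eps : R -> R),
    (forall t : R, continuous phi t) ->
    (forall t : R, continuous eps t) ->
    (forall t : R, 0 < eps t) ->
    exists y : R -> R,
      C4 y /\
      (forall t : R, eqB n y t) /\
      (forall t : R, Rabs (y t - phi t) < eps t).
Proof.
  intros phi eps Hphi Heps Hpos.
  destruct (choice _ (fun k => fine_mesh phi eps k Hphi Heps Hpos)) as [N HN].
  assert (HNpos : forall k, (0 < N k)%nat) by apply HN.
  exists (interpolant n phi N).
  destruct (C4_eqB_of_local_towers n (interpolant n phi N)) as [HC4 HB].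
  { intros t. apply interpolant_local_tower; auto. }
  split; [exact HC4 | split; [exact HB|]].
  intros t. apply interpolant_close; auto.
Qed.
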